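(* Let $G=(V,E)$ be a finite connected block graph with at least two vertices that has no false twins (no pair of distinct vertices $u,v$ with $N(u)=N(v)$), and suppose $G$ is isomorphic neither to the path $P_2$ on two vertices nor to the path $P_4$ on four vertices. Then $\gamma^{OLD}(G)\leq |V(G)|-1$.
   Context: A block graph is a graph in which every maximal 2-connected subgraph (block) is a clique. For a vertex $u$, $N(u)$ denotes its open neighborhood. A set $C\subseteq V(G)$ is an open locating-dominating code (OLD-code) if $N(u)\cap C\neq\emptyset$ for every vertex $u$ and $N(u)\cap C\neq N(v)\cap C$ for all distinct vertices $u,v$. A graph admits an OLD-code iff it has no isolated vertices and no false twins. $\gamma^{OLD}(G)$ is the minimum cardinality of an OLD-code of $G$. *)

From mathcomp Require Import all_boot.
Set Implicit Arguments. Unset Strict Implicit. Unset Printing Implicit Defensive.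

Section Graphs.
Variable T : finType.
Variable e : rel T.

Definition simple_graph := symmetric e /\ irreflexive e.

Definition nbhd (u : T) : {set T} := [set v | e u v].

Definition induced_rel (B : {set T}) : rel T :=
  [rel x y | [&& e x y, x \in B & y \in B]].
Definition induced_connected (B : {set T}) : Prop :=
  forall x y, x \in B -> y \in B -> connect (induced_rel B) x y.

Definition connected_graph : Prop := induced_connected setT.

(* 2-connected vertex set: at least two vertices, induces a connected
   subgraph, and stays connected after deleting any single vertex
   (so K2 is 2-connected, as in the usual notion of blocks). *)
Definition biconnected (B : {set T}) : Prop :=
  1 < #|B| /\ induced_connected B /\
  forall v, v \in B -> induced_connected (B :\ v).

Definition is_block (B : {set T}) : Prop :=
  biconnected B /\ forall B' : {set T}, B \subset B' -> biconnected B' -> B' = B.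

Definition is_clique (B : {set T}) : Prop :=
  forall x y, x \in B -> y \in B -> x != y -> e x y.

Definition block_graph : Prop := forall B, is_block B -> is_clique B.

Definition no_false_twins : Prop :=
  forall u v, u != v -> nbhd u != nbhd v.

Definition iso_path (n : nat) : Prop :=
  exists f : T -> 'I_n, bijective f /\
    forall x y, e x y = ((f x).+1 == f y) || ((f y).+1 == f x).

Definition is_OLD (C : {set T}) : bool :=
  [forall u, nbhd u :&: C != set0] &&
  [forall u, forall v, (u != v) ==> (nbhd u :&: C != nbhd v :&: C)].

(* minimum cardinality of an OLD-code (default #|T| if none exists,
   which never happens for graphs admitting an OLD-code) *)
Definition gamma_OLD : nat := \big[minn/#|T|]_(C : {set T} | is_OLD C) #|C|.

End Graphs.

(* Deleting a single vertex v from V gives an OLD-code unless some vertex has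
   v as its only neighbour, or two vertices have neighbourhoods differing
   exactly in v.  In a twin-free block graph the latter forces a leaf w at
   some a <> v and a vertex u with N(u) = {a, v}: a second neighbour z of w
   would give the 4-cycle w a u z, and the chord wu that a block graph
   requires is impossible since N(u) and N(w) agree at u.  Hence any v works
   if G has no leaf.  Otherwise a leaf x works unless G = P2 or x is such a
   v; in the last case G contains a path x a b w ending in a leaf w, and w
   works unless G = P4. *)

From mathcomp Require Import all_boot order zify.
Import Order.TTheory.
Set Implicit Arguments. Unset Strict Implicit. Unset Printing Implicit Defensive.

Section BlockGraphs.
Variables (T : finType) (e : rel T).
Hypotheses (e_sym : symmetric e) (e_irr : irreflexive e).

Lemma adj_neq x y : e x y -> x != y.
Proof. by apply: contraTneq => ->; rewrite e_irr. Qed.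

Lemma adjE x y : e x y = (y \in nbhd e x).
Proof. by rewrite inE. Qed.

Lemma induced_relS (A B : {set T}) :
  A \subset B -> subrel (induced_rel e A) (induced_rel e B).
Proof.
by move=> /subsetP sAB x y /and3P[exy xA yA]; apply/and3P; split; rewrite // sAB.
Qed.

Lemma induced_rel_sym (B : {set T}) : symmetric (induced_rel e B).
Proof. by move=> x y; rewrite /induced_rel /= e_sym [(x \in B) && _]andbC. Qed.

Lemma induced_connectedP (B : {set T}) :
  reflect (induced_connected e B)
          [forall x in B, forall y in B, connect (induced_rel e B) x y].
Proof.
apply: (iffP forall_inP) => [conn x y xB yB | conn x xB].
  exact: (forall_inP (conn x xB)).
by apply/forall_inP => y; apply: conn.
Qed.

Lemma induced_connected_hub (B : {set T}) z :
  (forall x, x \in B -> connect (induced_rel e B) x z) -> induced_connected e B.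
Proof.
move=> to_z x y xB yB; apply: connect_trans (to_z x xB) _.
by rewrite (sym_connect_sym (@induced_rel_sym B)); apply: to_z.
Qed.

Lemma induced_connected_star (B : {set T}) z :
  z \in B -> (forall x, x \in B -> x != z -> e x z) -> induced_connected e B.
Proof.
move=> zB star; apply: (@induced_connected_hub _ z) => x xB.
have [-> | xz] := eqVneq x z; first exact: connect0.
by apply: connect1; apply/and3P; split; rewrite // star.
Qed.

Lemma induced_connected_setD1 (B : {set T}) v u :
  v \in B -> u \in B -> e v u -> induced_connected e (B :\ v) ->
  induced_connected e B.
Proof.
move=> vB uB evu conn; apply: (@induced_connected_hub _ u) => x xB.
have [-> | xv] := eqVneq x v; first by apply: connect1; apply/and3P.
apply: connect_sub (conn x u _ _); last 2 first.
- by rewrite !inE xv.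
- by rewrite !inE eq_sym adj_neq.
by move=> y z yz; apply/connect1/(induced_relS (subsetDl B [set v])).
Qed.

Definition biconnectedb (B : {set T}) : bool :=
  [&& 1 < #|B|,
      [forall x in B, forall y in B, connect (induced_rel e B) x y] &
      [forall v in B, forall x in B :\ v, forall y in B :\ v,
         connect (induced_rel e (B :\ v)) x y]].

Lemma biconnectedP (B : {set T}) : reflect (biconnected e B) (biconnectedb B).
Proof.
apply: (iffP and3P) => [[B_gt1 /induced_connectedP B_conn delP] |
                        [B_gt1 [B_conn del]]].
  by do 2!split=> //; move=> v vB; apply/induced_connectedP/(forall_inP delP).
split=> //; first exact/induced_connectedP.
by apply/forall_inP => v vB; apply/induced_connectedP/del.
Qed.

Lemma biconnected_sub_block (S : {set T}) :
  biconnected e S -> exists2 B : {set T}, S \subset B & is_block e B.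
Proof.
move=> /biconnectedP S_bic.
have [B B_max SB] := maxset_exists S_bic.
have /maxsetP[/biconnectedP B_bic B_sup] := B_max.
by exists B => //; split=> // B' BB' /biconnectedP B'_bic; apply: B_sup.
Qed.

Definition cycle4 (x a y b : T) : bool :=
  [&& e x a, e a y, e y b, e b x, x != y & a != b].

Lemma cycle4_rot x a y b : cycle4 x a y b -> cycle4 a y b x.
Proof.
case/and5P=> exa eay eyb ebx /andP[xy ab].
by rewrite /cycle4 eay eyb ebx exa ab eq_sym xy.
Qed.

Lemma set4_rot (x a y b : T) : [set x; a; y; b] = [set a; y; b; x].
Proof. by apply/setP => z; rewrite !inE; do 4!case: (_ == _). Qed.

Lemma cycle4_connectedD1 x a y b :
  cycle4 x a y b -> induced_connected e ([set x; a; y; b] :\ x).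
Proof.
case/and5P=> exa eay eyb ebx /andP[xy ab].
apply: (@induced_connected_star _ y); first by rewrite !inE eq_sym xy eqxx !orbT.
move=> z; rewrite !inE => /andP[zx]; rewrite (negbTE zx) /= => z4 zy.
by move: z4; rewrite (negbTE zy) orbF => /orP[] /eqP->; rewrite // e_sym.
Qed.

Lemma cycle4_biconnected x a y b :
  cycle4 x a y b -> biconnected e [set x; a; y; b].
Proof.
move=> c4; have c4' := cycle4_rot c4; have c4'' := cycle4_rot c4'.
have /and5P[exa _ _ _ /andP[xy _]] := c4.
split; [|split].
- by apply/card_gt1P; exists x, y; rewrite !inE !eqxx !orbT.
- apply: (@induced_connected_setD1 _ x a) => //;
    [by rewrite !inE eqxx | by rewrite !inE eqxx !orbT | exact: cycle4_connectedD1].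
move=> v; rewrite !inE -!orbA => /or4P[] /eqP->.
- exact: cycle4_connectedD1 c4.
- by rewrite set4_rot; apply: cycle4_connectedD1 c4'.
- by rewrite 2!set4_rot; apply: cycle4_connectedD1 c4''.
- by rewrite 3!set4_rot; apply: cycle4_connectedD1 (cycle4_rot c4'').
Qed.

Hypothesis blocks : block_graph e.

Lemma block_graph_cycle4_chord x a y b : cycle4 x a y b -> e x y.
Proof.
move=> c4; have /and5P[_ _ _ _ /andP[xy _]] := c4.
have [B sub_B B_block] := biconnected_sub_block (cycle4_biconnected c4).
by apply: (blocks B_block) xy; apply: (subsetP sub_B); rewrite !inE eqxx ?orbT.
Qed.

Hypothesis e_conn : connected_graph e.

Lemma connected_closed_all (S : {set T}) s :
  s \in S -> (forall y z, y \in S -> e y z -> z \in S) -> forall z, z \in S.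
Proof.
move=> sS S_closed z.
have S_closedT : closed (induced_rel e [set: T]) S.
  move=> y t /and3P[eyt _ _]; apply/idP/idP => [yS | tS]; first exact: S_closed eyt.
  by apply: S_closed tS _; rewrite e_sym.
by rewrite -(closed_connect S_closedT (e_conn (in_setT s) (in_setT z))).
Qed.

Lemma connected_no_isolated : 1 < #|T| -> forall u, exists z, e u z.
Proof.
move=> T_gt1 u; case: (pickP (e u)) => [z euz | isolated]; first by exists z.
have all_u := @connected_closed_all [set u] u (set11 u).
have {}all_u z : z == u.
  by rewrite -in_set1; apply: all_u => y t /set1P-> eut; rewrite isolated in eut.
by move: T_gt1 => /card_gt1P[x [y [_ _]]]; rewrite (eqP (all_u x)) (eqP (all_u y)) eqxx.
Qed.

Lemma iso_path_nbhd (s : seq T) x0 : uniq s -> 0 < size s ->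
  (forall i z, i < size s -> e (nth x0 s i) z =
     (0 < i) && (z == nth x0 s i.-1) || (i.+1 < size s) && (z == nth x0 s i.+1)) ->
  iso_path e (size s).
Proof.
move=> s_uniq s_gt0 s_nbhd.
have s_all z : z \in s.
  suff: z \in [set y in s] by rewrite inE.
  apply: (connected_closed_all (s := nth x0 s 0)); first by rewrite inE mem_nth.
  move=> y t; rewrite !inE => ys.
  have lt_y : index y s < size s by rewrite index_mem.
  rewrite -(nth_index x0 ys) s_nbhd // => /orP[] /andP[lt /eqP->]; apply: mem_nth => //.
  exact: leq_ltn_trans (leq_pred _) lt_y.
have idx_lt z : index z s < size s by rewrite index_mem.
exists (fun z => Ordinal (idx_lt z)); split.
  exists (fun i : 'I_(size s) => nth x0 s i) => [z | i]; first by rewrite nth_index.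
  by apply: val_inj; rewrite /= index_uniq.
move=> y z /=; rewrite -{1}(nth_index x0 (s_all y)) s_nbhd //.
have nth_eq k : k < size s -> (z == nth x0 s k) = (index z s == k).
  by move=> lt; rewrite -{1}(nth_index x0 (s_all z)) nth_uniq.
have lt_y := idx_lt y; have lt_z := idx_lt z.
case: (ltnP (index y s).+1 (size s)) => [lt|ge] /=;
  rewrite !nth_eq ?(leq_ltn_trans (leq_pred _) lt_y) //; apply/idP/idP; lia.
Qed.

Lemma iso_path2 x a : nbhd e x = [set a] -> nbhd e a = [set x] -> iso_path e 2.
Proof.
move=> Nx Na; have xa : x != a by apply: adj_neq; rewrite adjE Nx inE.
apply: (@iso_path_nbhd [:: x; a] x); rewrite /= ?inE ?xa //.
by move=> [|[|i]] z //= _; rewrite adjE ?Nx ?Na inE ?orbF.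
Qed.

Lemma iso_path4 x a b w :
  nbhd e x = [set a] -> nbhd e a = [set x; b] -> nbhd e b = [set a; w] ->
  nbhd e w = [set b] -> x != b -> iso_path e 4.
Proof.
move=> Nx Na Nb Nw xb.
have xa : x != a by apply: adj_neq; rewrite adjE Nx inE.
have ab : a != b by apply: adj_neq; rewrite adjE Na set22.
have bw : b != w by apply: adj_neq; rewrite adjE Nb set22.
have xw : x != w.
  by apply: contraNneq ab => xw; have := set11 a; rewrite -Nx xw Nw inE.
have aw : a != w.
  by apply: contraNneq xb => aw; have := set21 x b; rewrite -Na aw Nw inE.
apply: (@iso_path_nbhd [:: x; a; b; w] x) => //.
  by rewrite /= !inE !negb_or xa xb xw ab aw bw.
by move=> [|[|[|[|i]]]] z //= _; rewrite adjE ?Nx ?Na ?Nb ?Nw !inE ?orbF.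
Qed.

Hypotheses (twin_free : no_false_twins e) (T_gt1 : 1 < #|T|).

Lemma other_nbr u v : nbhd e u != [set v] -> exists2 z, e u z & z != v.
Proof.
move=> Nu; have [z euz] := connected_no_isolated T_gt1 u.
case: (set_0Vmem (nbhd e u :\ v)) => [/eqP | [y]]; last first.
  by rewrite !inE => /andP[yv euy]; exists y.
rewrite setD_eq0 => sub; case/negP: Nu; rewrite eqEsubset sub sub1set.
by have := subsetP sub z; rewrite !inE euz => /(_ isT) /eqP <-.
Qed.

Lemma leaf_adj x a u : nbhd e x = [set a] -> e u x -> u = a.
Proof. by move=> Nx; rewrite e_sym adjE Nx inE => /eqP. Qed.

Definition separates_leaf (v : T) : bool :=
  [exists w, exists a, exists u,
     [&& a != v, nbhd e w == [set a] & nbhd e u == [set a; v]]].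

Lemma separates_leafP v :
  reflect (exists w a u, [/\ a != v, nbhd e w = [set a] & nbhd e u = [set a; v]])
          (separates_leaf v).
Proof.
apply: (iffP existsP) => [[w /existsP[a /existsP[u /and3P[av /eqP Nw /eqP Nu]]]] |
                          [w [a [u [av Nw Nu]]]]]; first by exists w, a, u.
by exists w; apply/existsP; exists a; apply/existsP; exists u; rewrite av Nw Nu !eqxx.
Qed.

Lemma nbhdD1_eq_separates_leaf u w v :
  u != w -> nbhd e u :\ v = nbhd e w :\ v -> separates_leaf v.
Proof.
move=> uw Nuw.
have agree z : z != v -> e u z = e w z.
  by move=> zv; move/setP/(_ z): Nuw; rewrite !inE zv.
have differ : e u v != e w v.
  apply: contraNneq (twin_free uw) => same; apply/eqP/setP => z; rewrite !inE.
  by have [-> | zv] := eqVneq z v; last exact: agree.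
wlog euv : u w uw {Nuw} agree differ / e u v.
  move=> wlog_case; case euv: (e u v); first exact: wlog_case uw agree differ euv.
  apply: (wlog_case w u); first by rewrite eq_sym.
  - by move=> z /agree.
  - by rewrite eq_sym.
  - by move: differ; rewrite euv; case: (e w v).
have nwv : ~~ e w v by move: differ; rewrite euv; case: (e w v).
have [a ewa] := connected_no_isolated T_gt1 w.
have av : a != v by apply: contraNneq nwv => <-.
have Nw : nbhd e w = [set a].
  apply/setP => z; rewrite !inE; apply/idP/eqP => [ewz | ->//].
  apply/eqP; apply: contraTT isT => za.
  have zv : z != v by apply: contraNneq nwv => <-.
  have uv : u != v by apply: contraTneq euv => ->; rewrite e_irr.
  have c4 : cycle4 w a u z.
    by rewrite /cycle4 [e a u]e_sym [e z w]e_sym !agree // ewa ewz eq_sym uw eq_sym za.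
  by move: (block_graph_cycle4_chord c4); rewrite -agree ?e_irr // eq_sym.
apply/separates_leafP; exists w, a, u; split=> //.
apply/setP => z; rewrite !inE; have [-> | zv] := eqVneq z v; first by rewrite euv orbT.
by rewrite orbF agree // adjE Nw inE.
Qed.

Lemma OLD_setD1 v :
  (forall u, nbhd e u != [set v]) -> ~~ separates_leaf v -> is_OLD e ([set: T] :\ v).
Proof.
move=> dominated not_sep; apply/andP; split.
  apply/forallP => u; have [z euz zv] := other_nbr (dominated u).
  by apply/set0Pn; exists z; rewrite !inE euz zv.
apply/forallP => u; apply/forallP => w; apply/implyP => uw.
apply: contra not_sep => /eqP; rewrite !setIDA !setIT.
exact: nbhdD1_eq_separates_leaf uw.
Qed.

Lemma OLD_setD1_leaf x a :
  nbhd e x = [set a] -> ~ iso_path e 2 -> ~~ separates_leaf x ->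
  is_OLD e ([set: T] :\ x).
Proof.
move=> Nx notP2 not_sep; apply: OLD_setD1 => // u; apply/eqP => Nu.
have ua : u = a by apply: leaf_adj Nx _; rewrite adjE Nu inE.
by apply: notP2; apply: iso_path2 Nx _; rewrite -ua.
Qed.

Lemma OLD_setD1_separated_leaf x a :
  nbhd e x = [set a] -> separates_leaf x -> ~ iso_path e 4 ->
  exists v, is_OLD e ([set: T] :\ v).
Proof.
move=> Nx /separates_leafP[w [b [u [bx Nw Nu]]]] notP4.
have ua : u = a by apply: leaf_adj Nx _; rewrite adjE Nu set22.
subst u.
have aw : a != w.
  by apply: contraNneq bx => aw; have := set22 b x; rewrite -Nu aw Nw inE eq_sym.
exists w; apply: OLD_setD1 => [u | ].
  apply: contraNneq aw => Nu'.
  have ub : u = b by apply: leaf_adj Nw _; rewrite adjE Nu' inE.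
  by have := set21 b x; rewrite -Nu -adjE e_sym adjE -ub Nu' inE.
apply/separates_leafP => -[w' [c [u' [cw Nw' Nu']]]].
have u'b : u' = b by apply: leaf_adj Nw _; rewrite adjE Nu' set22.
subst u'.
have ca : c = a.
  by have := set21 b x; rewrite -Nu -adjE e_sym adjE Nu' !inE (negbTE aw) orbF => /eqP.
subst c; apply: notP4; apply: iso_path4 Nx _ Nu' Nw _.
- by rewrite Nu setUC.
- by rewrite eq_sym.
Qed.

Lemma exists_OLD_setD1 :
  ~ iso_path e 2 -> ~ iso_path e 4 -> exists v, is_OLD e ([set: T] :\ v).
Proof.
move=> notP2 notP4.
have [/existsP[x /existsP[a /eqP Nx]] | /existsPn no_leaf] :=
  boolP [exists x, exists a, nbhd e x == [set a]].
  have [sep | not_sep] := boolP (separates_leaf x).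
    exact: OLD_setD1_separated_leaf Nx sep notP4.
  by exists x; apply: OLD_setD1_leaf Nx notP2 not_sep.
have [v _] := card_gt0P (ltnW T_gt1); exists v; apply: OLD_setD1.
  by move=> u; apply: (existsPn (no_leaf u)).
apply/separates_leafP => -[w [a [_ [_ Nw _]]]].
by case/existsP: (no_leaf w); exists a; rewrite Nw.
Qed.

End BlockGraphs.

Lemma gamma_OLD_le (T : finType) (e : rel T) (C : {set T}) :
  is_OLD e C -> gamma_OLD e <= #|C|.
Proof.
move=> C_OLD; have := @bigmin_le_cond _ nat _ #|T| _ _ (fun A : {set T} => #|A|) C_OLD.
by rewrite minEnat.
Qed.

Theorem theorem2p2 (T : finType) (e : rel T) :
  simple_graph e ->
  connected_graph e ->
  block_graph e ->
  1 < #|T| ->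
  no_false_twins e ->
  ~ iso_path e 2 ->
  ~ iso_path e 4 ->
  gamma_OLD e <= #|T| - 1.
Proof.
move=> [e_sym e_irr] e_conn blocks T_gt1 twin_free notP2 notP4.
have [v v_OLD] := exists_OLD_setD1 e_sym e_irr blocks e_conn twin_free T_gt1 notP2 notP4.
apply: leq_trans (gamma_OLD_le v_OLD) _.
by have := cardsD1 v [set: T]; rewrite in_setT cardsT; lia.
Qed.
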